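(* Let $\Lambda$ be a finite connected cubic graph admitting a group of automorphisms $G$ acting transitively on the $2$-arcs of $\Lambda$, and let $\Gamma=\mathrm{Dart}(\Lambda)$, with $G$ acting on $\Gamma$ naturally via $(u,v)\mapsto(u^g,v^g)$. Then $\Gamma$ is a tetravalent $G$-half-arc-transitive graph with $\mathrm{rad}_G(\Gamma)=3$ and $\mathrm{att}_G(\Gamma)=2$, and $\mathrm{Alt}_G(\Gamma)\cong\Lambda$. Moreover, the natural orientation of $\mathrm{Dart}(\Lambda)$ coincides with one of the two paired orientations of $\Gamma$ induced by the action of $G$.
   Context: All graphs are finite and simple. A $2$-arc is a walk $(x,y,z)$ with $x\ne z$. For a cubic graph $\Lambda$, the dart graph $\mathrm{Dart}(\Lambda)$ has as vertices the arcs (ordered pairs of adjacent vertices) of $\Lambda$, with $(u,v)$ adjacent to $(u',v')$ iff either $u'=v$ and $u\neq v'$, or $u=v'$ and $u'\neq v$; its natural orientation orients the edge $(u,v)(v,w)$ from $(u,v)$ to $(v,w)$. For a tetravalent graph $\Gamma$ and $G\le \mathrm{Aut}(\Gamma)$, $\Gamma$ is $G$-half-arc-transitive if $G$ acts transitively on vertices and edges but not on arcs; then the two $G$-orbits on arcs give two paired orientations of the edges, and each vertex is the tail of two and head of two incident edges. A $G$-alternating cycle is a cycle in which every two consecutive edges have a common head or a common tail. All have length $2\,\mathrm{rad}_G(\Gamma)$, and any two sharing a vertex meet in $\mathrm{att}_G(\Gamma)$ vertices. $\mathrm{Alt}_G(\Gamma)$ is the graph whose vertices are the $G$-alternating cycles,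 two adjacent iff they share a vertex. *)

From mathcomp Require Import all_boot all_fingroup.
Set Implicit Arguments. Unset Strict Implicit. Unset Printing Implicit Defensive.

Section Graphs.
Variable V : finType.
Variable E : rel V.

Definition simple_graph : Prop := symmetric E /\ irreflexive E.
Definition nbrs (x : V) : {set V} := [set y | E x y].
Definition regular (k : nat) : Prop := forall x, #|nbrs x| = k.
Definition cubic_graph : Prop := simple_graph /\ regular 3.
Definition tetravalent : Prop := simple_graph /\ regular 4.
Definition connected_graph : Prop := forall x y, connect E x y.

Variable gT : finGroupType.
Variable G : {set gT}.
Variable act : gT -> V -> V.

Definition acts_by_automorphisms : Prop :=
  forall g, g \in G -> injective (act g) /\ forall x y, E (act g x) (act g y) = E x y.

Definition vertex_transitive : Prop :=
  forall x y, exists2 g, g \in G & act g x = y.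

Definition edge_transitive : Prop :=
  forall x y x' y', E x y -> E x' y' ->
    exists2 g, g \in G &
      ((act g x = x' /\ act g y = y') \/ (act g x = y' /\ act g y = x')).

Definition arc_transitive : Prop :=
  forall x y x' y', E x y -> E x' y' ->
    exists2 g, g \in G & (act g x = x' /\ act g y = y').

Definition half_arc_transitive : Prop :=
  [/\ acts_by_automorphisms, vertex_transitive, edge_transitive & ~ arc_transitive].

(** The orientation induced by G from the arc (a,b): the G-orbit of (a,b);
    [orient a b x y] means that the edge xy is oriented from tail x to head y. *)
Definition orient (a b : V) (x y : V) : Prop :=
  E x y /\ exists2 g, g \in G & (act g a = x /\ act g b = y).

Definition is_cycle (c : seq V) : Prop := 3 <= size c /\ uniq c /\ path.cycle E c.

Definition alternating_wrt (O : V -> V -> Prop) (c : seq V) : Prop :=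
  is_cycle c /\
  forall x, x \in c ->
    (O (prev c x) x /\ O (next c x) x) \/ (O x (prev c x) /\ O x (next c x)).

Definition G_alternating (c : seq V) : Prop :=
  exists a b, E a b /\ alternating_wrt (orient a b) c.

(** A cycle, as a subgraph, is identified by its set of (oriented both ways) edges. *)
Definition cycle_edges (c : seq V) : {set V * V} :=
  [set p | (p.1 \in c) && ((p.2 == next c p.1) || (p.1 == next c p.2))].

Definition edge_verts (S : {set V * V}) : {set V} :=
  [set x | [exists y, (x, y) \in S]].

(** The vertices of Alt_G: edge sets of G-alternating cycles. *)
Definition alt_cycle (S : {set V * V}) : Prop :=
  exists2 c, G_alternating c & S = cycle_edges c.

Definition radius_is (r : nat) : Prop :=
  forall c, G_alternating c -> size c = 2 * r.

Definition attachment_is (k : nat) : Prop :=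
  forall S1 S2, alt_cycle S1 -> alt_cycle S2 -> S1 != S2 ->
    edge_verts S1 :&: edge_verts S2 != set0 ->
    #|edge_verts S1 :&: edge_verts S2| = k.

Definition alt_graph_iso (T : finType) (e : rel T) : Prop :=
  exists f : T -> {set V * V},
    [/\ injective f,
        (forall x, alt_cycle (f x)),
        (forall S, alt_cycle S -> exists x, f x = S) &
        (forall x y, e x y <-> (f x != f y /\ edge_verts (f x) :&: edge_verts (f y) != set0))].

End Graphs.

Section Dart.
Variable T : finType.
Variable e : rel T.

Definition is_automorphism (g : {perm T}) : Prop := forall x y, e (g x) (g y) = e x y.

Definition two_arc_transitive (G : {set {perm T}}) : Prop :=
  forall x y z x' y' z',
    e x y -> e y z -> x != z -> e x' y' -> e y' z' -> x' != z' ->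
    exists2 g, g \in G & [/\ g x = x', g y = y' & g z = z'].

Definition dart := {p : T * T | e p.1 p.2}.

Definition dart_rel : rel dart := fun a b =>
  (((val b).1 == (val a).2) && ((val a).1 != (val b).2)) ||
  (((val a).1 == (val b).2) && ((val b).1 != (val a).2)).

Definition dart_natural (a b : dart) : Prop :=
  (val b).1 = (val a).2 /\ (val a).1 <> (val b).2.

(** Natural action of g on darts (u,v) |-> (u^g, v^g)
    (the default branch is never used when g is an automorphism). *)
Definition dart_act (g : {perm T}) (d : dart) : dart :=
  odflt d (insub (g (val d).1, g (val d).2)).

End Dart.

From mathcomp Require Import all_boot all_fingroup.
From mathcomp Require Import zify.
Set Implicit Arguments. Unset Strict Implicit. Unset Printing Implicit Defensive.

(* The natural orientation (u,v) -> (v,w) of Dart(Lambda) is preserved by G, and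
   its arcs are exactly the 2-arcs (u,v,w) of Lambda, on which G is transitive.
   Hence G is transitive on the vertices and edges of Dart(Lambda), its two paired
   orientations are the natural one and its reverse, and no element of G reverses
   an arc, since that would turn a natural arc into a reversed one.
   Along an alternating cycle consecutive arcs turn around a common vertex of
   Lambda, so all darts of the cycle pass through one vertex v; the six darts at v
   induce a hexagon in Dart(Lambda) ((u,v) ~ (v,w) iff u <> w), so the alternating
   cycles are exactly these hexagons.  Two of them meet iff their vertices are
   adjacent, and then in the two darts joining them, which gives att = 2 and
   Alt_G(Dart(Lambda)) ~ Lambda. *)

Section CycleNext.
Variable T : eqType.

Lemma next_next_neq (c : seq T) x :
  uniq c -> 3 <= size c -> x \in c -> next c (next c x) != x.
Proof.
move=> uc sc /rot_to[i s' def_c].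
rewrite -!(next_rot i uc) def_c.
have := uc; rewrite -(rot_uniq i) def_c; have := sc; rewrite -(size_rot i) def_c.
case: s' {def_c} => [|y [|z r]] //= _.
rewrite !inE !negb_or => /and3P[/and3P[xy xz _] /andP[yz _] _].
by rewrite eqxx [y == x]eq_sym (negbTE xy) eqxx eq_sym.
Qed.

Lemma prev_neq_next (c : seq T) x :
  uniq c -> 3 <= size c -> x \in c -> prev c x != next c x.
Proof.
move=> uc sc cx; apply: contra (next_next_neq uc sc cx) => /eqP <-.
by rewrite (next_prev uc).
Qed.

End CycleNext.

Section Alternating.
Variables (V : finType) (E : rel V).

Lemma eq_alternating_wrt (O O' : V -> V -> Prop) c :
  (forall x y, O x y <-> O' x y) -> alternating_wrt E O c <-> alternating_wrt E O' c.
Proof.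
move=> OO'; rewrite /alternating_wrt; split=> -[cyc alt]; split=> // x /alt.
  by rewrite !OO'.
by rewrite -!OO'.
Qed.

Lemma alternating_wrt_flip (O : V -> V -> Prop) c :
  alternating_wrt E (fun x y => O y x) c <-> alternating_wrt E O c.
Proof.
rewrite /alternating_wrt; split=> -[cyc alt]; split=> // x /alt; tauto.
Qed.

End Alternating.

Section FinTypeFacts.
Variable T : finType.

Lemma cards2_eq (A : {set T}) x y :
  #|A| = 2 -> x \in A -> y \in A -> x != y -> A = [set x; y].
Proof.
move=> cA xA yA xy; apply/esym/eqP; rewrite eqEcard cards2 xy cA leqnn andbT.
by apply/subsetP=> z /set2P[]->.
Qed.

Lemma cycle_next_ind (c : seq T) (P : pred T) x0 :
  uniq c -> x0 \in c -> P x0 -> {in c, forall x, P x -> P (next c x)} ->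
  {subset c <= P}.
Proof.
move=> uc cx0 Px0 Pnext y cy.
have Piter n : (iter n (next c) x0 \in c) && P (iter n (next c) x0).
  elim: n => [|n /andP[cn Pn]] /=; first by rewrite cx0.
  by rewrite mem_next cn Pnext.
have x0y : fconnect (next c) x0 y by rewrite (fconnect_cycle (cycle_next uc)).
by case/andP: (Piter (findex (next c) x0 y)); rewrite iter_findex.
Qed.

End FinTypeFacts.

Section CubicDarts.
Variables (T : finType) (e : rel T).
Hypotheses (e_sym : symmetric e) (e_irr : irreflexive e) (cubic : regular e 3).

Local Notation D := (dart e).
Local Notation dart_rel := (dart_rel (e := e)).
Local Notation act := (@dart_act T e).

Definition src (d : D) : T := (val d).1.
Definition tgt (d : D) : T := (val d).2.
Definition mkdart u v (uv : e u v) : D := exist _ (u, v) uv.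

Lemma src_mkdart u v (uv : e u v) : src (mkdart uv) = u. Proof. by []. Qed.
Lemma tgt_mkdart u v (uv : e u v) : tgt (mkdart uv) = v. Proof. by []. Qed.

Lemma dart_edge (d : D) : e (src d) (tgt d). Proof. exact: valP d. Qed.

Lemma src_neq_tgt (d : D) : src d != tgt d.
Proof. by apply: contraTneq (dart_edge d) => ->; rewrite e_irr. Qed.

Lemma dart_eqE (a b : D) : (a == b) = (src a == src b) && (tgt a == tgt b).
Proof. by rewrite -val_eqE /src /tgt; case: (val a) (val b) => [? ?] []. Qed.

Lemma dart_ext (a b : D) : src a = src b -> tgt a = tgt b -> a = b.
Proof. by move=> sab tab; apply/eqP; rewrite dart_eqE sab tab !eqxx. Qed.

Definition dart_succ (a b : D) : bool := (src b == tgt a) && (src a != tgt b).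

Lemma dart_relE a b : dart_rel a b = dart_succ a b || dart_succ b a.
Proof. by rewrite /dart_rel /dart_succ /src /tgt eq_sym. Qed.

Lemma dart_succ_rel a b : dart_succ a b -> dart_rel a b.
Proof. by rewrite dart_relE => ->. Qed.

Lemma dart_rel_sym : symmetric dart_rel.
Proof. by move=> a b; rewrite !dart_relE orbC. Qed.

Lemma dart_succ_asym a b : dart_succ a b -> dart_succ b a = false.
Proof. by rewrite /dart_succ => /andP[/eqP-> ab]; rewrite (negbTE ab). Qed.

Lemma dart_naturalE a b : dart_natural a b <-> dart_succ a b.
Proof.
rewrite /dart_natural /dart_succ /src /tgt.
by split=> [[-> /eqP->]|/andP[/eqP-> /eqP]]; rewrite ?eqxx.
Qed.

Lemma card_nbrs_neq v a : e v a -> #|[set w in nbrs e v | w != a]| = 2.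
Proof.
move=> va; have -> : [set w in nbrs e v | w != a] = nbrs e v :\ a.
  by apply/setP=> w; rewrite !inE andbC.
by have := cardsD1 a (nbrs e v); rewrite cubic inE va => -[].
Qed.

Lemma exists_nbr_avoid v a b : exists w, [/\ e v w, w != a & w != b].
Proof.
have : 0 < #|nbrs e v :\ a :\ b|.
  have := cardsD1 b (nbrs e v :\ a); have := cardsD1 a (nbrs e v).
  by rewrite cubic; case: (_ \in _); case: (_ \in _) => /=; lia.
by case/card_gt0P=> w; rewrite !inE => /and3P[wb wa vw]; exists w.
Qed.

Lemma card_darts_from v (P : pred T) :
  #|[set d : D | (src d == v) && P (tgt d)]| = #|[set w in nbrs e v | P w]|.
Proof.
rewrite -(card_in_imset (f := tgt)); last first.
  move=> a b; rewrite !inE => /andP[/eqP av _] /andP[/eqP bv _] ab.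
  exact: dart_ext (etrans av (esym bv)) ab.
apply: eq_card => w; rewrite [RHS]inE inE; apply/imsetP/andP => [[d]|[vw Pw]].
  by rewrite inE => /andP[/eqP <- Pd] ->; rewrite dart_edge.
by exists (mkdart vw); rewrite // inE src_mkdart eqxx.
Qed.

Lemma card_darts_to v (P : pred T) :
  #|[set d : D | (tgt d == v) && P (src d)]| = #|[set w in nbrs e v | P w]|.
Proof.
rewrite -(card_in_imset (f := src)); last first.
  move=> a b; rewrite !inE => /andP[/eqP av _] /andP[/eqP bv _] ab.
  exact: dart_ext ab (etrans av (esym bv)).
apply: eq_card => w; rewrite [RHS]inE inE; apply/imsetP/andP => [[d]|[vw Pw]].
  by rewrite inE => /andP[/eqP <- Pd] ->; rewrite e_sym dart_edge.
by rewrite e_sym in vw; exists (mkdart vw); rewrite // inE tgt_mkdart eqxx.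
Qed.

Lemma dart_tetravalent : tetravalent dart_rel.
Proof.
split; first split; first exact: dart_rel_sym.
  by move=> a; rewrite dart_relE orbb /dart_succ andbN.
move=> x.
have -> : nbrs dart_rel x = [set d | (src d == tgt x) && (tgt d != src x)] :|:
                            [set d | (tgt d == src x) && (src d != tgt x)].
  by apply/setP=> d; rewrite !inE dart_relE /dart_succ [src x == _]eq_sym.
rewrite cardsU (card_darts_from _ (predC1 (src x))) (card_darts_to _ (predC1 (tgt x))).
rewrite !card_nbrs_neq -?[e _ (src x)]e_sym ?dart_edge //.
suff -> : [set d | (src d == tgt x) && (tgt d != src x)] :&:
          [set d | (tgt d == src x) && (src d != tgt x)] = set0 by rewrite cards0.
by apply/setP=> d; rewrite !inE; case: eqP; rewrite ?andbF.
Qed.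

Lemma dart_succ_exists x : exists y, dart_succ x y.
Proof.
have [w [xw wx _]] := exists_nbr_avoid (tgt x) (src x) (src x).
by exists (mkdart xw); rewrite /dart_succ src_mkdart tgt_mkdart eqxx eq_sym wx.
Qed.

Lemma exists_dart_succ : 0 < #|T| -> exists a b, dart_succ a b.
Proof.
case/card_gt0P=> u _; have [v [uv _ _]] := exists_nbr_avoid u u u.
by have [b ab] := dart_succ_exists (mkdart uv); exists (mkdart uv), b.
Qed.

Definition star v : {set D} := [set d | (src d == v) || (tgt d == v)].

Lemma star_rel_src v x y : src x = v -> (y \in star v) && dart_rel x y = dart_succ y x.
Proof.
move=> xv; rewrite inE dart_relE /dart_succ xv [v == tgt y]eq_sym.
have := src_neq_tgt x; rewrite xv => vx.
case: (tgt y =P v) => _; rewrite /= ?orbT ?andbT ?andbF ?orbF //.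
by case: (src y =P v) => // ->; rewrite (negbTE vx).
Qed.

Lemma star_rel_tgt v x y : tgt x = v -> (y \in star v) && dart_rel x y = dart_succ x y.
Proof.
move=> xv; rewrite inE dart_relE /dart_succ xv.
have := src_neq_tgt x; rewrite xv => xv'.
case: (src y =P v) => _; rewrite /= ?orbT ?andbT ?andbF ?orbF //.
by case: (tgt y =P v) => // ->; rewrite (negbTE xv').
Qed.

Lemma card_star_nbrs v x : x \in star v -> #|[set y in star v | dart_rel x y]| = 2.
Proof.
rewrite inE => /orP[/eqP xv|/eqP xv].
  rewrite -(card_nbrs_neq (v := v) (a := tgt x)) -?xv ?dart_edge //.
  rewrite -(card_darts_to _ (predC1 (tgt x))).
  by apply: eq_card => y; rewrite [in LHS]inE star_rel_src // inE /dart_succ xv eq_sym.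
rewrite -(card_nbrs_neq (v := v) (a := src x)) -?xv 1?e_sym ?dart_edge //.
rewrite -(card_darts_from _ (predC1 (src x))).
apply: eq_card => y; rewrite [in LHS]inE star_rel_tgt // inE /dart_succ xv /=.
by rewrite [tgt y == _]eq_sym.
Qed.

Lemma star_cycle_nbrs c v x :
  is_cycle dart_rel c -> {subset c <= star v} -> x \in c ->
  [set y in star v | dart_rel x y] = [set prev c x; next c x].
Proof.
move=> [sc [uc cc]] cv xc; apply: cards2_eq; first exact/card_star_nbrs/cv.
- by rewrite inE cv ?mem_prev // dart_rel_sym prev_cycle.
- by rewrite inE cv ?mem_next // next_cycle.
- exact: prev_neq_next.
Qed.

Lemma star_subset_closed v (A : {set D}) x :
  {in star v &, forall y z, dart_rel y z -> y \in A -> z \in A} ->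
  x \in star v -> x \in A -> star v \subset A.
Proof.
move=> closedA xv xA.
(* The darts at v form the hexagon (u,v) ~ (v,w), u <> w; walk around it from x. *)
have from_v d : src d = v -> d \in star v by rewrite inE => ->; rewrite eqxx.
have to_v d : tgt d = v -> d \in star v by rewrite inE => ->; rewrite eqxx orbT.
have adj a b : tgt a = v -> src b = v -> src a != tgt b -> dart_rel b a.
  by move=> av bv ab; rewrite dart_rel_sym dart_relE /dart_succ av bv eqxx ab.
have [y yA yv] : exists2 y, y \in A & tgt y = v.
  move: (xv); rewrite inE => /orP[/eqP xsv|/eqP]; last by exists x.
  have [w [vw wx _]] := exists_nbr_avoid v (tgt x) (tgt x).
  rewrite e_sym in vw; exists (mkdart vw) => //.
  exact: closedA (to_v _ (tgt_mkdart _)) (adj _ _ (tgt_mkdart _) xsv wx) xA.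
have from_A d : src d = v -> d \in A.
  have far b : src b = v -> tgt b != src y -> b \in A.
    move=> bv by'; apply: closedA (to_v _ yv) (from_v _ bv) _ yA.
    by rewrite dart_rel_sym adj // eq_sym.
  move=> dv; have [dy|] := eqVneq (tgt d) (src y); last exact: far.
  have [w [vw wy _]] := exists_nbr_avoid v (src y) (src y).
  have [r [vr ry rw]] := exists_nbr_avoid v (src y) w.
  rewrite e_sym in vr.
  have rA : mkdart vr \in A.
    have wA := far _ (src_mkdart vw) wy.
    have wr := adj _ _ (tgt_mkdart vr) (src_mkdart vw) rw.
    exact: closedA (from_v _ (src_mkdart vw)) (to_v _ (tgt_mkdart _)) wr wA.
  by apply: closedA (to_v _ (tgt_mkdart _)) (from_v _ dv) _ rA; rewrite dart_rel_sym adj // dy.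
apply/subsetP=> d; rewrite inE => /orP[/eqP|/eqP dv]; first exact: from_A.
have [w [vw wd _]] := exists_nbr_avoid v (src d) (src d).
apply: closedA (from_v _ (src_mkdart vw)) (to_v _ dv) _ (from_A _ (src_mkdart _)).
by apply: adj; rewrite // eq_sym.
Qed.

Lemma star_cycle_eq c v :
  is_cycle dart_rel c -> {subset c <= star v} -> c =i star v.
Proof.
move=> cyc cv; have [sc _] := cyc.
have [x xc] : exists x, x \in c by case: c {cyc cv} sc => // x c _; exists x; rewrite mem_head.
suff /subsetP vc : star v \subset [set y in c].
  by move=> y; apply/idP/idP=> [/cv|/vc]; rewrite ?inE.
apply: (star_subset_closed _ (cv x xc)); last by rewrite inE.
move=> y z _ zv yz; rewrite !inE => yc.
have : z \in [set z in star v | dart_rel y z] by rewrite inE zv.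
by rewrite (star_cycle_nbrs cyc cv yc) => /set2P[]->; rewrite ?mem_prev ?mem_next.
Qed.

Lemma star_cycle_alternating c v :
  is_cycle dart_rel c -> {subset c <= star v} -> alternating_wrt dart_rel dart_succ c.
Proof.
move=> cyc cv; split=> // x xc; have [_ [_ cc]] := cyc.
have xp : (prev c x \in star v) && dart_rel x (prev c x).
  by rewrite cv ?mem_prev // dart_rel_sym prev_cycle.
have xn : (next c x \in star v) && dart_rel x (next c x) by rewrite cv ?mem_next // next_cycle.
move: (cv x xc); rewrite inE => /orP[/eqP xv|/eqP xv].
  by left; rewrite -!(star_rel_src _ xv).
by right; rewrite -!(star_rel_tgt _ xv).
Qed.

Lemma alternating_in_star c :
  alternating_wrt dart_rel dart_succ c -> exists v, {subset c <= star v}.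
Proof.
move=> [[sc [uc cc]] alt].
have [x0 x0c] : exists x, x \in c.
  by case: c {uc cc alt} sc => // x c _; exists x; rewrite mem_head.
have x0n : dart_rel x0 (next c x0) := next_cycle cc x0c.
(* v is the vertex shared by the first two darts; alternation forces every
   later pair of consecutive darts to turn around the same vertex. *)
pose v := if dart_succ x0 (next c x0) then tgt x0 else src x0.
exists v; pose P x := (x \in star v) && (next c x \in star v).
suff cP : {subset c <= P} by move=> x /cP /andP[].
apply: (cycle_next_ind uc x0c).
  rewrite /P /v !inE; case: ifP => [/andP[/eqP-> _]|]; rewrite ?eqxx ?orbT //.
  by move: x0n; rewrite dart_relE => /orP[->|/andP[/eqP-> _] _]; rewrite ?eqxx ?orbT.
move=> x xc /andP[xv nv]; rewrite /P nv /=.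
have nc : next c x \in c by rewrite mem_next.
have := alt _ nc; rewrite (prev_next uc).
move: (nv); rewrite inE => /orP[/eqP nsv|/eqP ntv].
  have xn : dart_succ x (next c x) by rewrite -(star_rel_src _ nsv) xv dart_rel_sym next_cycle.
  case=> [[_ /andP[/eqP nnv _]]|[/dart_succ_asym]]; last by rewrite xn.
  by rewrite inE -nnv nsv eqxx orbT.
have nx : dart_succ (next c x) x by rewrite -(star_rel_tgt _ ntv) xv dart_rel_sym next_cycle.
case=> [[/dart_succ_asym]|[_ /andP[/eqP nnv _]]]; first by rewrite nx.
by rewrite inE nnv ntv eqxx.
Qed.

Lemma alternating_star c :
  alternating_wrt dart_rel dart_succ c -> exists v, c =i star v.
Proof.
move=> alt; have [v cv] := alternating_in_star alt.
by exists v; apply: star_cycle_eq cv; case: alt.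
Qed.

Lemma exists_star_cycle v : exists2 c, is_cycle dart_rel c & c =i star v.
Proof.
have [w1 [vw1 _ _]] := exists_nbr_avoid v v v.
have [w2 [vw2 w21 _]] := exists_nbr_avoid v w1 w1.
have [w3 [vw3 w31 w32]] := exists_nbr_avoid v w1 w2.
have w1v : e w1 v by rewrite e_sym.
have w2v : e w2 v by rewrite e_sym.
have w3v : e w3 v by rewrite e_sym.
pose c := [:: mkdart w1v; mkdart vw2; mkdart w3v; mkdart vw1; mkdart w2v; mkdart vw3].
have cv : {subset c <= star v} by apply/allP; rewrite /= !inE /= !eqxx ?orbT.
have neqF (u w : T) : u != w -> (u == w) = false /\ (w == u) = false.
  by move=> uw; rewrite (negbTE uw) eq_sym (negbTE uw).
have nbr_neq u : e v u -> v != u by apply: contraTneq => <-; rewrite e_irr.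
have [v1 v1'] := neqF _ _ (nbr_neq _ vw1); have [v2 v2'] := neqF _ _ (nbr_neq _ vw2).
have [v3 v3'] := neqF _ _ (nbr_neq _ vw3); have [w12 w12'] := neqF _ _ w21.
have [w13 w13'] := neqF _ _ w31; have [w23 w23'] := neqF _ _ w32.
have cyc : is_cycle dart_rel c.
  split=> //; split.
    rewrite /= !inE !dart_eqE !src_mkdart !tgt_mkdart.
    by rewrite ?v1 ?v1' ?v2 ?v2' ?v3 ?v3' ?w12 ?w12' ?w13 ?w13' ?w23 ?w23' ?andbF.
  rewrite /= !dart_relE /dart_succ !src_mkdart !tgt_mkdart !eqxx.
  by rewrite ?v1 ?v1' ?v2 ?v2' ?v3 ?v3' ?w12 ?w12' ?w13 ?w13' ?w23 ?w23'.
by exists c; last exact: star_cycle_eq.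
Qed.

Lemma card_star v : #|star v| = 6.
Proof.
have -> : star v = [set d | (src d == v) && predT (tgt d)] :|:
                   [set d | (tgt d == v) && predT (src d)].
  by apply/setP=> d; rewrite !inE !andbT.
rewrite cardsU card_darts_from card_darts_to.
have -> : [set w in nbrs e v | predT w] = nbrs e v by apply/setP=> w; rewrite !inE andbT.
suff -> : [set d | (src d == v) && predT (tgt d)] :&:
          [set d | (tgt d == v) && predT (src d)] = set0 by rewrite cubic cards0.
apply/setP=> d; rewrite !inE !andbT; case: eqP => // <-.
by rewrite eq_sym (negbTE (src_neq_tgt d)).
Qed.

Definition star_edges v : {set D * D} :=
  [set p | [&& dart_rel p.1 p.2, p.1 \in star v & p.2 \in star v]].

Lemma cycle_edges_star c v :
  is_cycle dart_rel c -> c =i star v -> cycle_edges c = star_edges v.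
Proof.
move=> cyc cv; have [_ [uc _]] := cyc.
have cv' : {subset c <= star v} by move=> x; rewrite cv.
apply/setP=> -[x y]; rewrite [in LHS]inE [in RHS]inE /= -!cv andbCA.
case xc: (x \in c) => //=; rewrite andbC cv.
have /setP/(_ y) := star_cycle_nbrs cyc cv' xc; rewrite !inE => ->.
by rewrite orbC eq_sym (can2_eq (prev_next uc) (next_prev uc)).
Qed.

Lemma edge_verts_star_edges v : edge_verts (star_edges v) = star v.
Proof.
apply/setP=> x; rewrite [in LHS]inE; apply/existsP/idP=> [[y]|xv].
  by rewrite inE => /and3P[].
have /card_gt0P[y] : 0 < #|[set y in star v | dart_rel x y]| by rewrite card_star_nbrs.
by rewrite inE => /andP[yv xy]; exists y; rewrite inE /= xy xv.
Qed.

Lemma star_inj : injective star.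
Proof.
move=> x y /setP xy.
have [w1 [xw1 _ _]] := exists_nbr_avoid x x x.
have [w2 [xw2 w21 _]] := exists_nbr_avoid x w1 w1.
have := xy (mkdart xw1); have := xy (mkdart xw2).
rewrite !inE !src_mkdart !tgt_mkdart eqxx /=.
move=> /esym/orP[/eqP //|/eqP w2y] /esym/orP[/eqP //|/eqP w1y].
by rewrite w1y w2y eqxx in w21.
Qed.

Lemma star_edges_inj : injective star_edges.
Proof. by move=> x y xy; apply: star_inj; rewrite -!edge_verts_star_edges xy. Qed.

Lemma in_starI x y d : x != y ->
  (d \in star x :&: star y) = (src d == x) && (tgt d == y) || (src d == y) && (tgt d == x).
Proof.
move=> xy; rewrite !inE; case: (src d =P x) => [->|_].
  by rewrite (negbTE xy) /= orbF.
case: (src d =P y) => _ /=; first by rewrite andbT.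
by case: (tgt d =P x) => // ->; rewrite (negbTE xy).
Qed.

Lemma card_starI x y : x != y -> #|star x :&: star y| = (e x y).*2.
Proof.
move=> xy; have [exy|nexy] := boolP (e x y).
  have eyx : e y x by rewrite e_sym.
  have -> : star x :&: star y = [set mkdart exy; mkdart eyx].
    by apply/setP=> d; rewrite in_starI // !inE !dart_eqE.
  by rewrite cards2 dart_eqE /= (negbTE xy).
apply: eq_card0 => d; apply/negbTE; rewrite in_starI //.
by apply: contra nexy => /orP[]/andP[/eqP<- /eqP<-]; rewrite ?[e (tgt d) _]e_sym dart_edge.
Qed.

Section Automorphism.
Variable g : {perm T}.
Hypothesis g_aut : is_automorphism e g.

Lemma dart_act_val d : val (act g d) = (g (src d), g (tgt d)).
Proof.
have gd : e (g (src d)) (g (tgt d)) by rewrite g_aut dart_edge.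
by rewrite /dart_act (@insubT _ _ D (g (src d), g (tgt d)) gd).
Qed.

Lemma src_dart_act d : src (act g d) = g (src d).
Proof. by rewrite /src dart_act_val. Qed.

Lemma tgt_dart_act d : tgt (act g d) = g (tgt d).
Proof. by rewrite /tgt dart_act_val. Qed.

Lemma dart_act_inj : injective (act g).
Proof.
move=> a b ab; apply: dart_ext; apply: (@perm_inj _ g).
  by rewrite -!src_dart_act ab.
by rewrite -!tgt_dart_act ab.
Qed.

Lemma dart_succ_act a b : dart_succ (act g a) (act g b) = dart_succ a b.
Proof. by rewrite /dart_succ !src_dart_act !tgt_dart_act !(inj_eq perm_inj). Qed.

Lemma dart_rel_act a b : dart_rel (act g a) (act g b) = dart_rel a b.
Proof. by rewrite !dart_relE !dart_succ_act. Qed.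

End Automorphism.

Section TwoArcTransitive.
Variable G : {group {perm T}}.
Hypotheses (G_aut : forall g, g \in G -> is_automorphism e g)
           (G_2arc : two_arc_transitive e G) (T_gt0 : 0 < #|T|).

Lemma dart_succ_transitive a b a' b' : dart_succ a b -> dart_succ a' b' ->
  exists2 g, g \in G & act g a = a' /\ act g b = b'.
Proof.
move=> /andP[/eqP ba ab] /andP[/eqP ba' ab'].
have ab2 : e (tgt a) (tgt b) by rewrite -ba dart_edge.
have ab2' : e (tgt a') (tgt b') by rewrite -ba' dart_edge.
have [g gG [ga gab gb]] := G_2arc (dart_edge a) ab2 ab (dart_edge a') ab2' ab'.
exists g => //; have g_aut := G_aut gG.
by split; apply: dart_ext; rewrite ?src_dart_act ?tgt_dart_act ?ba ?ba'.
Qed.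

Lemma orient_succ a b : dart_succ a b ->
  forall x y, orient dart_rel G act a b x y <-> dart_succ x y.
Proof.
move=> ab x y; split=> [[_ [g gG [<- <-]]]|xy]; first by rewrite (dart_succ_act (G_aut gG)).
by split; [exact: dart_succ_rel | exact: dart_succ_transitive].
Qed.

Lemma orient_succ_rev a b : dart_succ b a ->
  forall x y, orient dart_rel G act a b x y <-> dart_succ y x.
Proof.
move=> ba x y; split=> [[_ [g gG [<- <-]]]|yx]; first by rewrite (dart_succ_act (G_aut gG)).
split; first by rewrite dart_rel_sym dart_succ_rel.
by have [g gG [? ?]] := dart_succ_transitive ba yx; exists g.
Qed.

Lemma G_alternatingE c :
  G_alternating dart_rel G act c <-> alternating_wrt dart_rel dart_succ c.
Proof.
split=> [[a [b [ab alt]]]|alt].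
  move: ab; rewrite dart_relE => /orP[ab|ba].
    by rewrite -(eq_alternating_wrt _ _ (orient_succ ab)).
  by rewrite -alternating_wrt_flip -(eq_alternating_wrt _ _ (orient_succ_rev ba)).
have [a [b ab]] := exists_dart_succ T_gt0.
exists a, b; split; first exact: dart_succ_rel.
exact/(eq_alternating_wrt _ _ (orient_succ ab)).
Qed.

Lemma alt_cycleE S : alt_cycle dart_rel G act S <-> exists v, S = star_edges v.
Proof.
split=> [[c /G_alternatingE alt ->]|[v ->]].
  have [v cv] := alternating_star alt.
  by exists v; apply: cycle_edges_star cv; case: alt.
have [c cyc cv] := exists_star_cycle v.
exists c; last by rewrite (cycle_edges_star cyc cv).
by apply/G_alternatingE/(star_cycle_alternating (v := v) cyc) => x; rewrite cv.
Qed.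

Lemma dart_half_arc_transitive : half_arc_transitive dart_rel G act.
Proof.
split.
- by move=> g /G_aut g_aut; split; [exact: dart_act_inj | exact: dart_rel_act].
- move=> x y; have [x' xx'] := dart_succ_exists x; have [y' yy'] := dart_succ_exists y.
  by have [g gG [? _]] := dart_succ_transitive xx' yy'; exists g.
- move=> x y x' y'; rewrite !dart_relE => /orP[xy|xy] /orP[xy'|xy'];
    by have [g gG [? ?]] := dart_succ_transitive xy xy'; exists g; tauto.
- move=> arc; have [a [b ab]] := exists_dart_succ T_gt0.
  have ba : dart_rel b a by rewrite dart_rel_sym dart_succ_rel.
  have [g gG [ga gb]] := arc a b b a (dart_succ_rel ab) ba.
  by have := dart_succ_act (G_aut gG) a b; rewrite ga gb ab (dart_succ_asym ab).
Qed.

Lemma dart_radius : radius_is dart_rel G act 3.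
Proof.
move=> c /G_alternatingE alt; have [v cv] := alternating_star alt.
by case: alt => -[_ [uc _]] _; rewrite -(card_uniqP uc) (eq_card cv) card_star.
Qed.

Lemma dart_attachment : attachment_is dart_rel G act 2.
Proof.
move=> _ _ /alt_cycleE[x ->] /alt_cycleE[y ->] xy.
have {}xy : x != y by apply: contraNneq xy => ->.
by rewrite !edge_verts_star_edges -card_gt0 card_starI //; case: (e x y).
Qed.

Lemma dart_alt_graph_iso : alt_graph_iso dart_rel G act e.
Proof.
exists star_edges; split.
- exact: star_edges_inj.
- by move=> x; apply/alt_cycleE; exists x.
- by move=> S /alt_cycleE[x ->]; exists x.
move=> x y; rewrite !edge_verts_star_edges -card_gt0.
have [->|xy] := eqVneq x y; first by rewrite e_irr eqxx; split=> // -[].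
have sxy : star_edges x != star_edges y by apply: contra_neq xy => /star_edges_inj.
by rewrite card_starI // sxy; case: (e x y); split=> // -[].
Qed.

Lemma dart_natural_orient : exists a b, dart_rel a b /\
  forall x y, dart_natural x y <-> orient dart_rel G act a b x y.
Proof.
have [a [b ab]] := exists_dart_succ T_gt0.
exists a, b; split=> [|x y]; first exact: dart_succ_rel.
by rewrite dart_naturalE; apply: iff_sym; exact: orient_succ.
Qed.

End TwoArcTransitive.

End CubicDarts.

Theorem proposition2p2 (T : finType) (e : rel T) (G : {group {perm T}}) :
  0 < #|T| ->
  cubic_graph e -> connected_graph e ->
  (forall g, g \in G -> is_automorphism e g) ->
  two_arc_transitive e G ->
  [/\ tetravalent (dart_rel (e := e)),
      half_arc_transitive (dart_rel (e := e)) G (@dart_act T e),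
      radius_is (dart_rel (e := e)) G (@dart_act T e) 3,
      attachment_is (dart_rel (e := e)) G (@dart_act T e) 2 &
      (
      alt_graph_iso (dart_rel (e := e)) G (@dart_act T e) e /\
      exists a b : dart e, dart_rel a b /\
        forall x y : dart e,
          dart_natural x y <-> orient (dart_rel (e := e)) G (@dart_act T e) a b x y)].
Proof.
move=> T_gt0 [[e_sym e_irr] cubic] _ G_aut G_2arc; split.
- exact: dart_tetravalent.
- exact: dart_half_arc_transitive.
- exact: dart_radius.
- exact: dart_attachment.
- split; [exact: dart_alt_graph_iso | exact: dart_natural_orient].
Qed.
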